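(* Let $\kappa>0$ and $0<\gamma\le\pi/2$. Let $S$ be a sessile liquid channel (a $\kappa$-cylindrical surface supported on the horizontal plane $\Pi$) making contact angle $\gamma$, with volume $\mathcal V$. Then every sessile liquid channel resting on $\Pi$ with the same contact angle $\gamma$ and smaller volume can be rigidly translated so that it lies strictly in the interior of the region enclosed by $S$ and $\Pi$.
   Context: For $u_0>0$, $(r(\psi),u(\psi))$, $\psi\in[0,\pi]$, is the solution of $\frac{dr}{d\psi}=\frac{\cos\psi}{\kappa u}$, $\frac{du}{d\psi}=\frac{\sin\psi}{\kappa u}$, $r(0)=0$, $u(0)=u_0$ (profile of a $\kappa$-cylindrical surface parametrized by inclination angle). The channel with parameter $u_0$ and contact angle $\gamma$ has cross-section the planar region bounded by the curve $\{(\pm r(\psi),u(\psi)):0\le\psi\le\gamma\}$ and the segment of the line $u=u(\gamma)$ (the plane $\Pi$) joining its endpoints; its volume per unit length is $\mathcal V=2\big(r(\gamma)u(\gamma)-\frac{\sin\gamma}\kappa\big)$. *)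

From Stdlib Require Import Reals.
From Coquelicot Require Import Coquelicot.
Open Scope R_scope.

Definition is_profile (kappa u0 : R) (r u : R -> R) : Prop :=
  r 0 = 0 /\ u 0 = u0 /\
  (forall psi, 0 <= psi <= PI ->
     is_derive r psi (cos psi / (kappa * u psi)) /\
     is_derive u psi (sin psi / (kappa * u psi))).

(* Closed cross-section of the channel with contact angle gamma (0<gamma<=pi/2):
   the planar region bounded by the curve {(+-r(psi),u(psi)) : 0<=psi<=gamma}
   and the segment of the line u = u(gamma) joining its endpoints.
   Since r is increasing on [0,gamma] the curve is a graph over |x|. *)
Definition channel_region (gamma : R) (r u : R -> R) (x y : R) : Prop :=
  exists psi, 0 <= psi <= gamma /\ Rabs x = r psi /\ u psi <= y <= u gamma.

(* Volume per unit length. *)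
Definition channel_volume (kappa gamma : R) (r u : R -> R) : R :=
  2 * (r gamma * u gamma - sin gamma / kappa).

Definition interior_pt (A : R -> R -> Prop) (x y : R) : Prop :=
  exists e, 0 < e /\ forall x' y', Rabs (x' - x) < e -> Rabs (y' - y) < e -> A x' y'.

(* Along a profile, v^2 = u0^2 + 2 (1 - cos psi) / kappa.  Hence the ratio
   v(gamma) / v(psi) decreases with u0, so r(gamma) v(gamma), and with it the
   volume, decreases as u0 grows: the smaller channel has the larger bottom
   height, u0 < u1.  Then v1 - u1 <= v0 - u0 and r1 <= r0, strictly at gamma.
   Lower the small channel by u1 - u0 and raise it by half of the positive gap
   (v0 gamma - u0) - (v1 gamma - u1).  Its profile lies on the inner side of
   every tangent line of the large, convex profile, so it keeps a margin of half
   the gap at the top, of r0 - r1 at the sides, and at the bottom of half the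
   gap up to a horizontal error divided by cos phi, which stays bounded as long
   as phi stays below some g < gamma with r0(g) > r1(gamma). *)

From Stdlib Require Import Reals Lra Ranalysis5.
From Coquelicot Require Import Coquelicot.
Open Scope R_scope.

Lemma continuity_pt_is_derive (f : R -> R) (x l : R) :
  is_derive f x l -> continuity_pt f x.
Proof.
  intros Hf. apply derivable_continuous_pt.
  exists l. now apply is_derive_Reals.
Qed.

Lemma le_of_is_derive_nonneg (f df : R -> R) (a b : R) : a <= b ->
  (forall x, a <= x <= b -> is_derive f x (df x)) ->
  (forall x, a <= x <= b -> 0 <= df x) -> f a <= f b.
Proof.
  intros Hab Hd Hpos.
  destruct (MVT_gen f a b df) as [c [Hc Hmvt]];
    rewrite ?Rmin_left, ?Rmax_right in * by lra.
  - intros x Hx. apply Hd; lra.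
  - intros x Hx. apply (continuity_pt_is_derive f x (df x)), Hd; lra.
  - assert (0 <= df c * (b - a)) by (apply Rmult_le_pos; [apply Hpos|]; lra).
    lra.
Qed.

Lemma lt_of_is_derive_pos (f df : R -> R) (a b : R) : a < b ->
  (forall x, a <= x <= b -> is_derive f x (df x)) ->
  (forall x, a <= x <= b -> 0 < df x) -> f a < f b.
Proof.
  intros Hab Hd Hpos.
  destruct (MVT_gen f a b df) as [c [Hc Hmvt]];
    rewrite ?Rmin_left, ?Rmax_right in * by lra.
  - intros x Hx. apply Hd; lra.
  - intros x Hx. apply (continuity_pt_is_derive f x (df x)), Hd; lra.
  - assert (0 < df c * (b - a)) by (apply Rmult_lt_0_compat; [apply Hpos|]; lra).
    lra.
Qed.

Lemma eq_of_is_derive_zero (f : R -> R) (a b : R) : a <= b ->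
  (forall x, a <= x <= b -> is_derive f x 0) -> f a = f b.
Proof.
  intros Hab Hd.
  assert (f a <= f b)
    by (apply (le_of_is_derive_nonneg f (fun _ => 0)); [lra|exact Hd|intros; lra]).
  assert (- f a <= - f b); [|lra].
  apply (le_of_is_derive_nonneg (fun x => - f x) (fun _ => - 0)); [lra| |intros; lra].
  intros x Hx. apply (is_derive_opp f), Hd, Hx.
Qed.

Lemma IVT_interv_le (f : R -> R) (a b y : R) : a <= b ->
  (forall x, a <= x <= b -> continuity_pt f x) -> f a <= y <= f b ->
  exists c, a <= c <= b /\ f c = y.
Proof.
  intros Hab Hf Hy.
  destruct (Req_dec (f a) y) as [Ea|Ea]; [exists a; split; [lra|exact Ea]|].
  destruct (Req_dec (f b) y) as [Eb|Eb]; [exists b; split; [lra|exact Eb]|].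
  assert (a < b) by (destruct (Req_dec a b) as [<-|]; lra).
  destruct (IVT_interv (fun x => f x - y) a b) as [c [Hc Hfc]]; try lra.
  - intros x Hx. apply continuity_pt_minus; [apply Hf, Hx|apply continuity_pt_const].
    now intros u v.
  - exists c. split; lra.
Qed.

Lemma continuity_pt_gt_left (f : R -> R) (a b c : R) : a < b ->
  continuity_pt f b -> c < f b -> exists g, a < g < b /\ c < f g.
Proof.
  intros Hab Hf Hc.
  destruct (Hf (f b - c)) as [eta [Heta Hnear]]; [lra|].
  set (g := b - Rmin eta (b - a) / 2).
  assert (Hmin : 0 < Rmin eta (b - a)) by (apply Rmin_glb_lt; lra).
  pose proof (Rmin_l eta (b - a)). pose proof (Rmin_r eta (b - a)).
  exists g. split; [unfold g; lra|].
  assert (Hg : Rabs (f g - f b) < f b - c).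
  { apply Hnear. split; [split; [exact I|unfold g; lra]|].
    simpl; unfold R_dist. rewrite Rabs_left; unfold g; lra. }
  apply Rabs_def2 in Hg. lra.
Qed.

Section Profile.

Variables (kappa u0 : R) (r v : R -> R).
Hypotheses (kappa_pos : 0 < kappa) (u0_pos : 0 < u0)
  (prof : is_profile kappa u0 r v).

Lemma profile_r0 : r 0 = 0.
Proof. apply prof. Qed.

Lemma profile_v0 : v 0 = u0.
Proof. apply prof. Qed.

Lemma profile_is_derive_r psi : 0 <= psi <= PI ->
  is_derive r psi (cos psi / (kappa * v psi)).
Proof. intros Hpsi. apply prof, Hpsi. Qed.

Lemma profile_is_derive_v psi : 0 <= psi <= PI ->
  is_derive v psi (sin psi / (kappa * v psi)).
Proof. intros Hpsi. apply prof, Hpsi. Qed.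

Let is_derive_v_sq t : 0 <= t <= PI -> is_derive (fun t => v t * v t) t
  (sin t / (kappa * v t) * v t + v t * (sin t / (kappa * v t))).
Proof.
  intros Ht. apply (is_derive_mult v v); [apply profile_is_derive_v; exact Ht..|].
  intros; apply Rmult_comm.
Qed.

(* Even where [v] might vanish, [(v^2)' = 2 v sin/(kappa v)] is [0] or
   [2 sin/kappa] (Rocq's [/ 0 = 0]), so it is nonnegative on [[0, PI]]. *)
Lemma profile_v_sq_ge psi : 0 <= psi <= PI -> u0 * u0 <= v psi * v psi.
Proof.
  intros Hpsi. rewrite <- profile_v0.
  apply (le_of_is_derive_nonneg (fun t => v t * v t)
    (fun t => sin t / (kappa * v t) * v t + v t * (sin t / (kappa * v t))));
    [lra| |].
  - intros t Ht. apply is_derive_v_sq; lra.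
  - intros t Ht. assert (0 <= sin t) by (apply sin_ge_0; lra).
    destruct (Req_dec (v t) 0) as [E|E]; [rewrite E; lra|].
    replace (sin t / (kappa * v t) * v t + v t * (sin t / (kappa * v t)))
      with (2 * sin t / kappa) by (field; lra).
    apply Rdiv_le_0_compat; lra.
Qed.

Lemma profile_v_neq0 psi : 0 <= psi <= PI -> v psi <> 0.
Proof.
  intros Hpsi E. pose proof (profile_v_sq_ge psi Hpsi). rewrite E in *. nra.
Qed.

Lemma profile_v_pos psi : 0 <= psi <= PI -> 0 < v psi.
Proof.
  intros Hpsi. apply Rnot_le_lt. intros Hle.
  destruct (IVT_interv_le (fun t => - v t) 0 psi 0) as [c [Hc Hvc]];
    [lra| |rewrite profile_v0; lra|].
  - intros t Ht. apply (continuity_pt_is_derive _ _ _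
      (is_derive_opp v t _ (profile_is_derive_v t ltac:(lra)))).
  - apply (profile_v_neq0 c); lra.
Qed.

Lemma profile_v_sq psi : 0 <= psi <= PI ->
  v psi * v psi = u0 * u0 + 2 * (1 - cos psi) / kappa.
Proof.
  intros Hpsi.
  enough (E : v 0 * v 0 - 2 * (1 - cos 0) / kappa =
              v psi * v psi - 2 * (1 - cos psi) / kappa).
  { rewrite profile_v0, cos_0 in E. lra. }
  apply (eq_of_is_derive_zero (fun t => v t * v t - 2 * (1 - cos t) / kappa));
    [lra|].
  intros t Ht. pose proof (profile_v_neq0 t ltac:(lra)).
  assert (Hs : is_derive (fun t => 2 * (1 - cos t) / kappa) t (2 * sin t / kappa))
    by (auto_derive; [exact I|field; lra]).
  replace 0 with ((sin t / (kappa * v t) * v t + v t * (sin t / (kappa * v t)))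
                  - 2 * sin t / kappa) by (field; lra).
  apply (is_derive_minus (fun t => v t * v t)); [apply is_derive_v_sq; lra|exact Hs].
Qed.

Lemma profile_r_le phi psi : 0 <= phi <= psi -> psi <= PI / 2 -> r phi <= r psi.
Proof.
  intros Hphi Hpsi. pose proof PI_RGT_0.
  apply (le_of_is_derive_nonneg r (fun t => cos t / (kappa * v t))); [lra| |].
  - intros t Ht. apply profile_is_derive_r; lra.
  - intros t Ht. pose proof (profile_v_pos t ltac:(lra)).
    apply Rdiv_le_0_compat; [apply cos_ge_0|apply Rmult_lt_0_compat]; lra.
Qed.

Lemma profile_r_onto g w : 0 <= g <= PI -> 0 <= w <= r g ->
  exists phi, 0 <= phi <= g /\ r phi = w.
Proof.
  intros Hg Hw. apply IVT_interv_le; [lra| |rewrite profile_r0; lra].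
  intros t Ht. apply (continuity_pt_is_derive r t _ (profile_is_derive_r t ltac:(lra))).
Qed.

End Profile.

Section Comparison.

Variables (kappa gamma u0 u1 : R) (r0 v0 r1 v1 : R -> R).
Hypotheses (kappa_pos : 0 < kappa) (gamma_range : 0 < gamma <= PI / 2)
  (u0_pos : 0 < u0) (prof0 : is_profile kappa u0 r0 v0)
  (u1_pos : 0 < u1) (prof1 : is_profile kappa u1 r1 v1).


Let cos_nonneg t : 0 <= t <= gamma -> 0 <= cos t.
Proof. intros Ht. apply cos_ge_0; pose proof PI_RGT_0; lra. Qed.

Let r0_at_0 := profile_r0 kappa u0 r0 v0 prof0.
Let r1_at_0 := profile_r0 kappa u1 r1 v1 prof1.
Let v0_at_0 := profile_v0 kappa u0 r0 v0 prof0.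
Let v1_at_0 := profile_v0 kappa u1 r1 v1 prof1.
Let v0_pos := profile_v_pos kappa u0 r0 v0 kappa_pos u0_pos prof0.
Let v1_pos := profile_v_pos kappa u1 r1 v1 kappa_pos u1_pos prof1.
Let v0_sq := profile_v_sq kappa u0 r0 v0 kappa_pos u0_pos prof0.
Let v1_sq := profile_v_sq kappa u1 r1 v1 kappa_pos u1_pos prof1.
Let r0_deriv := profile_is_derive_r kappa u0 r0 v0 prof0.
Let r1_deriv := profile_is_derive_r kappa u1 r1 v1 prof1.
Let v0_deriv := profile_is_derive_v kappa u0 r0 v0 prof0.
Let v1_deriv := profile_is_derive_v kappa u1 r1 v1 prof1.

Lemma profile_ratio_le t : 0 <= t <= gamma -> u1 <= u0 ->
  v0 gamma * v1 t <= v1 gamma * v0 t.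
Proof.
  intros Ht Hu.
  pose proof (v0_sq t ltac:(lra)) as E0t. pose proof (v1_sq t ltac:(lra)) as E1t.
  pose proof (v0_sq gamma ltac:(lra)) as E0g. pose proof (v1_sq gamma ltac:(lra)) as E1g.
  pose proof (v0_pos t ltac:(lra)). pose proof (v1_pos t ltac:(lra)).
  pose proof (v0_pos gamma ltac:(lra)). pose proof (v1_pos gamma ltac:(lra)).
  set (st := 2 * (1 - cos t) / kappa) in *.
  set (sg := 2 * (1 - cos gamma) / kappa) in *.
  assert (st <= sg).
  { unfold st, sg, Rdiv. apply Rmult_le_compat_r; [left; apply Rinv_0_lt_compat; lra|].
    assert (cos gamma <= cos t) by (apply cos_decr_1; lra). lra. }
  assert (Hsq : (v0 gamma * v1 t) * (v0 gamma * v1 t) <= (v1 gamma * v0 t) * (v1 gamma * v0 t)).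
  { replace ((v0 gamma * v1 t) * (v0 gamma * v1 t)) with ((u0 * u0 + sg) * (u1 * u1 + st))
      by (rewrite <- E0g, <- E1t; ring).
    replace ((v1 gamma * v0 t) * (v1 gamma * v0 t)) with ((u1 * u1 + sg) * (u0 * u0 + st))
      by (rewrite <- E1g, <- E0t; ring).
    assert (0 <= (sg - st) * (u0 * u0 - u1 * u1)) by (apply Rmult_le_pos; nra).
    nra. }
  apply Rsqr_incr_0_var; [exact Hsq|].
  apply Rmult_le_pos; lra.
Qed.

Lemma channel_volume_le : u1 <= u0 ->
  channel_volume kappa gamma r0 v0 <= channel_volume kappa gamma r1 v1.
Proof.
  intros Hu. unfold channel_volume.
  assert (E : v1 gamma * r1 0 - v0 gamma * r0 0 <= v1 gamma * r1 gamma - v0 gamma * r0 gamma).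
  { apply (le_of_is_derive_nonneg (fun t => v1 gamma * r1 t - v0 gamma * r0 t)
      (fun t => cos t * (v1 gamma * v0 t - v0 gamma * v1 t) / (kappa * v0 t * v1 t)));
      [lra| |].
    - intros t Ht. pose proof (v0_pos t ltac:(lra)). pose proof (v1_pos t ltac:(lra)).
      pose proof (r0_deriv t ltac:(lra)) as D0. pose proof (r1_deriv t ltac:(lra)) as D1.
      auto_derive.
      + repeat split; eexists; eassumption.
      + rewrite (is_derive_unique (fun x : R => r0 x) t _ D0),
          (is_derive_unique (fun x : R => r1 x) t _ D1).
        field; lra.
    - intros t Ht. pose proof (v0_pos t ltac:(lra)). pose proof (v1_pos t ltac:(lra)).
      pose proof (profile_ratio_le t Ht Hu).
      pose proof (cos_nonneg t Ht).
      apply Rdiv_le_0_compat; [apply Rmult_le_pos; lra|repeat apply Rmult_lt_0_compat; lra]. }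
  rewrite r0_at_0, r1_at_0 in E.
  nra.
Qed.

Hypothesis u0_lt_u1 : u0 < u1.

Lemma profile_v_lt t : 0 <= t <= PI -> v0 t < v1 t.
Proof.
  intros Ht. pose proof (v0_sq t Ht). pose proof (v1_sq t Ht).
  pose proof (v0_pos t Ht). pose proof (v1_pos t Ht). nra.
Qed.

(* [v - u] is [s / (v + u)] with [s = v^2 - u^2] independent of the profile. *)
Lemma profile_rise_le t : 0 <= t <= PI -> v1 t - u1 <= v0 t - u0.
Proof.
  intros Ht. pose proof (v0_sq t Ht). pose proof (v1_sq t Ht).
  pose proof (v0_pos t Ht). pose proof (v1_pos t Ht). pose proof (profile_v_lt t Ht).
  assert (0 <= 2 * (1 - cos t) / kappa)
    by (pose proof (COS_bound t); apply Rdiv_le_0_compat; lra).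
  assert (u1 <= v1 t) by nra.
  assert ((v1 t - u1) * (v0 t + u0) <= (v0 t - u0) * (v0 t + u0)) by nra.
  nra.
Qed.

Definition rise_gap := (v0 gamma - u0) - (v1 gamma - u1).

Lemma rise_gap_pos : 0 < rise_gap.
Proof.
  unfold rise_gap.
  pose proof (v0_sq gamma ltac:(lra)). pose proof (v1_sq gamma ltac:(lra)).
  pose proof (v0_pos gamma ltac:(lra)). pose proof (v1_pos gamma ltac:(lra)).
  pose proof (profile_v_lt gamma ltac:(lra)).
  assert (0 < 2 * (1 - cos gamma) / kappa).
  { assert (cos gamma < cos 0) by (apply cos_decreasing_1; lra).
    rewrite cos_0 in *. apply Rdiv_lt_0_compat; lra. }
  assert (u0 < v0 gamma) by nra. nra.
Qed.

Let r_gap_deriv t : 0 <= t <= PI ->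
  is_derive (fun x => r0 x - r1 x) t (cos t * (v1 t - v0 t) / (kappa * v0 t * v1 t)).
Proof.
  intros Ht. pose proof (v0_pos t Ht). pose proof (v1_pos t Ht).
  replace (cos t * (v1 t - v0 t) / (kappa * v0 t * v1 t))
    with (cos t / (kappa * v0 t) - cos t / (kappa * v1 t)) by (field; lra).
  apply (is_derive_minus r0 r1); [apply r0_deriv|apply r1_deriv]; exact Ht.
Qed.

Lemma r_gap_le a b : 0 <= a <= b -> b <= gamma -> r0 a - r1 a <= r0 b - r1 b.
Proof.
  intros Hab Hb.
  apply (le_of_is_derive_nonneg (fun x => r0 x - r1 x)
    (fun t => cos t * (v1 t - v0 t) / (kappa * v0 t * v1 t))); [lra| |].
  - intros t Ht. apply r_gap_deriv; lra.
  - intros t Ht. pose proof (v0_pos t ltac:(lra)). pose proof (v1_pos t ltac:(lra)).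
    pose proof (profile_v_lt t ltac:(lra)). pose proof (cos_nonneg t ltac:(lra)).
    apply Rdiv_le_0_compat; [apply Rmult_le_pos; lra|repeat apply Rmult_lt_0_compat; lra].
Qed.

Lemma profile_r_le_r t : 0 <= t <= gamma -> r1 t <= r0 t.
Proof.
  intros Ht. pose proof (r_gap_le 0 t ltac:(lra) ltac:(lra)).
  rewrite r0_at_0, r1_at_0 in *. lra.
Qed.

Lemma profile_r_lt_r : r1 gamma < r0 gamma.
Proof.
  assert (r0 0 - r1 0 < r0 (gamma / 2) - r1 (gamma / 2)).
  { apply (lt_of_is_derive_pos (fun x => r0 x - r1 x)
      (fun t => cos t * (v1 t - v0 t) / (kappa * v0 t * v1 t))); [lra| |].
    - intros t Ht. apply r_gap_deriv; lra.
    - intros t Ht. pose proof (v0_pos t ltac:(lra)). pose proof (v1_pos t ltac:(lra)).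
      pose proof (profile_v_lt t ltac:(lra)).
      assert (0 < cos t) by (apply cos_gt_0; lra).
      apply Rdiv_lt_0_compat; [apply Rmult_lt_0_compat; lra|
                               repeat apply Rmult_lt_0_compat; lra]. }
  pose proof (r_gap_le (gamma / 2) gamma ltac:(lra) ltac:(lra)).
  rewrite r0_at_0, r1_at_0 in *. lra.
Qed.

(* Component along the inner normal [(- sin phi, cos phi)] of the vector from
   the point [phi] of [(r0, v0)] to the point [psi] of [(r1, v1)] lowered by
   [u1 - u0]: it is nonnegative iff the latter lies on the inner side of the
   tangent line at [phi]. *)
Definition tangent_gap phi psi :=
  cos phi * (v1 psi + (u0 - u1) - v0 phi) - sin phi * (r1 psi - r0 phi).

Lemma tangent_gap_diag_nonneg t : 0 <= t <= gamma -> 0 <= tangent_gap t t.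
Proof.
  intros Ht.
  replace 0 with (tangent_gap 0 0)
    by (unfold tangent_gap; rewrite v0_at_0, v1_at_0, sin_0; ring).
  apply (le_of_is_derive_nonneg (fun t => tangent_gap t t)
    (fun t => sin t * ((v0 t - u0) - (v1 t - u1)) + cos t * (r0 t - r1 t))); [lra| |].
  - intros x Hx. pose proof (v0_pos x ltac:(lra)). pose proof (v1_pos x ltac:(lra)).
    pose proof (r0_deriv x ltac:(lra)) as Dr0. pose proof (r1_deriv x ltac:(lra)) as Dr1.
    pose proof (v0_deriv x ltac:(lra)) as Dv0. pose proof (v1_deriv x ltac:(lra)) as Dv1.
    unfold tangent_gap. auto_derive.
    + repeat split; eexists; eassumption.
    + rewrite (is_derive_unique (fun x : R => r0 x) x _ Dr0),
        (is_derive_unique (fun x : R => r1 x) x _ Dr1),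
        (is_derive_unique (fun x : R => v0 x) x _ Dv0),
        (is_derive_unique (fun x : R => v1 x) x _ Dv1).
      field; lra.
  - intros x Hx. pose proof (profile_rise_le x ltac:(lra)).
    pose proof (profile_r_le_r x ltac:(lra)). pose proof (cos_nonneg x ltac:(lra)).
    assert (0 <= sin x) by (apply sin_ge_0; lra).
    apply Rplus_le_le_0_compat; apply Rmult_le_pos; lra.
Qed.

(* [psi |-> tangent_gap phi psi] has derivative [sin (psi - phi) / (kappa v1)],
   so it is smallest at [psi = phi]. *)
Lemma tangent_gap_nonneg phi psi : 0 <= phi <= gamma -> 0 <= psi <= gamma ->
  0 <= tangent_gap phi psi.
Proof.
  intros Hphi Hpsi.
  assert (Hd : forall x, 0 <= x <= gamma ->
    is_derive (tangent_gap phi) x (sin (x - phi) / (kappa * v1 x))).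
  { intros x Hx. pose proof (v1_pos x ltac:(lra)).
    pose proof (r1_deriv x ltac:(lra)) as Dr1. pose proof (v1_deriv x ltac:(lra)) as Dv1.
    unfold tangent_gap. auto_derive.
    - repeat split; eexists; eassumption.
    - rewrite (is_derive_unique (fun x : R => r1 x) x _ Dr1),
        (is_derive_unique (fun x : R => v1 x) x _ Dv1), sin_minus.
      field; lra. }
  pose proof (tangent_gap_diag_nonneg phi Hphi).
  destruct (Rle_dec phi psi) as [Hle|Hlt].
  - enough (tangent_gap phi phi <= tangent_gap phi psi) by lra.
    apply (le_of_is_derive_nonneg _ (fun x => sin (x - phi) / (kappa * v1 x))); [lra| |].
    + intros x Hx. apply Hd; lra.
    + intros x Hx. pose proof (v1_pos x ltac:(lra)).
      apply Rdiv_le_0_compat; [apply sin_ge_0|apply Rmult_lt_0_compat]; lra.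
  - enough (- tangent_gap phi psi <= - tangent_gap phi phi) by lra.
    apply (le_of_is_derive_nonneg (fun x => - tangent_gap phi x)
      (fun x => - (sin (x - phi) / (kappa * v1 x)))); [lra| |].
    + intros x Hx. apply (is_derive_opp (tangent_gap phi)), Hd; lra.
    + intros x Hx. pose proof (v1_pos x ltac:(lra)).
      replace (x - phi) with (- (phi - x)) by ring. rewrite sin_neg.
      replace (- (- sin (phi - x) / (kappa * v1 x))) with (sin (phi - x) / (kappa * v1 x))
        by (field; lra).
      apply Rdiv_le_0_compat; [apply sin_ge_0|apply Rmult_lt_0_compat]; lra.
Qed.

Lemma lifted_profile_tangent_bound phi psi : 0 <= phi <= gamma -> 0 <= psi <= gamma ->
  cos phi * (v0 phi - (v1 psi + (u0 - u1))) <= Rabs (r0 phi - r1 psi).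
Proof.
  intros Hphi Hpsi. pose proof (tangent_gap_nonneg phi psi Hphi Hpsi) as G.
  unfold tangent_gap in G.
  assert (0 <= sin phi <= 1) by (split; [apply sin_ge_0; lra|apply SIN_bound]).
  pose proof (Rle_abs (r0 phi - r1 psi)).
  pose proof (Rle_abs (- (r0 phi - r1 psi))). rewrite Rabs_Ropp in *.
  nra.
Qed.

Lemma lifted_channel_interior g x y : 0 < g < gamma -> r1 gamma < r0 g ->
  channel_region gamma r1 v1 x y ->
  interior_pt (channel_region gamma r0 v0) x (y + (u0 - u1 + rise_gap / 2)).
Proof.
  intros Hg Hrg [psi [Hpsi [Hx Hy]]].
  pose proof rise_gap_pos. pose proof PI_RGT_0.
  assert (Hcg : 0 < cos g) by (apply cos_gt_0; lra).
  assert (cos g <= 1) by apply COS_bound.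
  pose proof (Rmin_l (rise_gap * cos g / 4) (r0 g - r1 gamma)).
  pose proof (Rmin_r (rise_gap * cos g / 4) (r0 g - r1 gamma)).
  (* The bottom margin [rise_gap / 2] must absorb both [e] and [e / cos g]. *)
  set (e := Rmin (rise_gap * cos g / 4) (r0 g - r1 gamma)) in *.
  assert (He : 0 < e) by (apply Rmin_glb_lt; [apply Rmult_lt_0_compat|]; nra).
  exists e. split; [exact He|]. intros x' y' Hx' Hy'.
  assert (Hxx : Rabs (Rabs x' - Rabs x) < e)
    by (eapply Rle_lt_trans; [apply Rabs_triang_inv2|exact Hx']).
  pose proof (profile_r_le _ _ _ _ kappa_pos u1_pos prof1 psi gamma ltac:(lra) ltac:(lra)).
  pose proof Hxx as Hxx'. apply Rabs_def2 in Hxx'. apply Rabs_def2 in Hy'.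
  destruct (profile_r_onto _ _ _ _ prof0 g (Rabs x'))
    as [phi [Hphi Hr]]; [lra|split; [apply Rabs_pos|lra]|].
  exists phi. split; [lra|]. split; [auto|].
  pose proof (lifted_profile_tangent_bound phi psi ltac:(lra) Hpsi) as B.
  rewrite Hr, <- Hx in B.
  assert (Hdrop : v0 phi - (v1 psi + (u0 - u1)) <= rise_gap / 4).
  { destruct (Rle_dec (v0 phi - (v1 psi + (u0 - u1))) 0); [lra|].
    apply (Rmult_le_reg_l (cos g)); [lra|].
    assert (cos g <= cos phi) by (apply cos_decr_1; lra).
    assert (cos g * (v0 phi - (v1 psi + (u0 - u1)))
            <= cos phi * (v0 phi - (v1 psi + (u0 - u1))))
      by (apply Rmult_le_compat_r; lra).
    lra. }
  destruct Hy' as [Hy'1 Hy'2].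
  assert (e <= rise_gap / 4) by nra.
  unfold rise_gap in *. split; lra.
Qed.

End Comparison.

Theorem mainTheorem15 (kappa gamma u0 u1 : R) (r0 v0 r1 v1 : R -> R) :
  0 < kappa -> 0 < gamma <= PI / 2 ->
  0 < u0 -> is_profile kappa u0 r0 v0 ->
  0 < u1 -> is_profile kappa u1 r1 v1 ->
  channel_volume kappa gamma r1 v1 < channel_volume kappa gamma r0 v0 ->
  exists a b : R, forall x y : R,
    channel_region gamma r1 v1 x y ->
    interior_pt (channel_region gamma r0 v0) (x + a) (y + b).
Proof.
  intros Hk Hg Hu0 P0 Hu1 P1 Hvol.
  assert (Hu : u0 < u1).
  { apply Rnot_le_lt. intros Hle. apply (Rlt_not_le _ _ Hvol).
    now apply (channel_volume_le kappa gamma u0 u1 r0 v0 r1 v1). }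
  destruct (continuity_pt_gt_left r0 0 gamma (r1 gamma)) as [g [Hg' Hrg]].
  - lra.
  - eapply continuity_pt_is_derive, (profile_is_derive_r kappa u0 r0 v0 P0).
    pose proof PI_RGT_0; lra.
  - now apply (profile_r_lt_r kappa gamma u0 u1 r0 v0 r1 v1).
  - exists 0, (u0 - u1 + rise_gap gamma u0 u1 v0 v1 / 2).
    intros x y Hxy. rewrite Rplus_0_r.
    now apply (lifted_channel_interior kappa gamma u0 u1 r0 v0 r1 v1 Hk Hg Hu0 P0 Hu1 P1 Hu g).
Qed.
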